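(* Let $A\in\mathbb{R}^{n\times m}$, let $b\in\mathbb{R}^n$ lie in the span of the columns of $A$, and let $x^*$ be an optimal solution of $\min_{x\in\mathbb{R}^m:\, A x = b} \|x\|_\infty$. Let $r \in \Delta_m$ have strictly positive entries. Then \[ \|x^*\|_\infty^2 \geq b^\top \left(A\,\mathbf{D}(r)^{-1}A^{\top}\right)^+ b . \]
   Context: $\Delta_m=\{p\in\mathbb{R}^m: \sum_i p_i=1,\ p_i\ge 0\}$ is the probability simplex. For a vector $r$, $\mathbf{D}(r)$ is the diagonal matrix with diagonal $r$. For a symmetric matrix $L$, $L^+$ denotes its Moore–Penrose pseudoinverse. *)

From HB Require Import structures.
From mathcomp Require Import all_boot all_order all_algebra.
From mathcomp Require Import boolp classical_sets reals.
Set Implicit Arguments. Unset Strict Implicit. Unset Printing Implicit Defensive.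
Import Order.TTheory GRing.Theory Num.Theory.
Local Open Scope ring_scope.

Definition is_pinv (R : realType) (k : nat) (L P : 'M[R]_k) : Prop :=
  [/\ L *m P *m L = L, P *m L *m P = P,
      (L *m P)^T = L *m P & (P *m L)^T = P *m L].

(* The Moore-Penrose pseudoinverse L^+ (chosen classically; it exists and is
   unique for real matrices). *)
Definition pinv (R : realType) (k : nat) (L : 'M[R]_k) : 'M[R]_k :=
  xget 0 (fun P => is_pinv L P).

Definition normInf (R : realType) (m : nat) (x : 'cV[R]_m) : R :=
  \big[Num.max/0]_(i < m) `|x i 0|.

Definition Dg (R : realType) (m : nat) (r : 'cV[R]_m) : 'M[R]_m :=
  diag_mx r^T.

From HB Require Import structures.
From mathcomp Require Import all_boot all_order all_algebra.
From mathcomp Require Import boolp classical_sets reals.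
From mathcomp Require Import ring lra.
Import Order.TTheory GRing.Theory Num.Theory.
Local Open Scope ring_scope.

(* Write L = A D(r)^-1 A^T, P = L^+ and c = A^T P b. For any x with A x = b,
   Q := b^T P b equals both x^T c and c^T D(r)^-1 c (the latter by P L P = P).
   Expanding 0 <= sum_i r_i (x_i - c_i / r_i)^2 gives Q <= sum_i r_i x_i^2,
   a convex combination of the x_i^2, hence at most ||x||_oo^2. *)

Lemma normInf_ge {R : realType} {m : nat} (x : 'cV[R]_m) (i : 'I_m) :
  `|x i 0| <= normInf x.
Proof.
by rewrite /normInf (bigD1 i) //= le_max lexx.
Qed.

Lemma convex_sqr_le_normInf {R : realType} {m : nat} (x r : 'cV[R]_m) :
  (forall i, 0 <= r i 0) -> \sum_i r i 0 = 1 ->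
  \sum_i r i 0 * x i 0 ^+ 2 <= normInf x ^+ 2.
Proof.
move=> r_ge0 r_sum1.
rewrite -[_ ^+ 2]mul1r -r_sum1 mulr_suml; apply: ler_sum => i _.
have N_ge0 : 0 <= normInf x := le_trans (normr_ge0 _) (normInf_ge x i).
by rewrite ler_wpM2l // -real_normK ?num_real // ler_sqr ?nnegrE ?normInf_ge.
Qed.

Lemma weighted_young {R : realType} {m : nat} (x c r : 'cV[R]_m) :
  (forall i, 0 < r i 0) ->
  2 * \sum_i x i 0 * c i 0 - \sum_i c i 0 ^+ 2 / r i 0
    <= \sum_i r i 0 * x i 0 ^+ 2.
Proof.
move=> r_gt0; rewrite mulr_sumr -sumrB; apply: ler_sum => i _.
have r_neq0 : r i 0 != 0 by exact: lt0r_neq0.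
have -> : 2 * (x i 0 * c i 0) - c i 0 ^+ 2 / r i 0
        = r i 0 * x i 0 ^+ 2 - r i 0 * (x i 0 - c i 0 / r i 0) ^+ 2 by field.
by rewrite lerBlDr lerDl mulr_ge0 ?sqr_ge0 ?ltW.
Qed.

Lemma invmx_Dg {R : realType} {m : nat} (r : 'cV[R]_m) :
  (forall i, r i 0 != 0) -> invmx (Dg r) = diag_mx (\row_j (r j 0)^-1).
Proof.
move=> r_neq0.
have DgK : Dg r *m diag_mx (\row_j (r j 0)^-1) = 1%:M.
  rewrite /Dg mulmx_diag -diag_const_mx; congr diag_mx.
  by apply/matrixP => i j; rewrite !mxE mulfV.
have [Dg_unit _] := mulmx1_unit DgK.
by rewrite -[RHS](mulKmx Dg_unit) DgK mulmx1.
Qed.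

Lemma is_pinv_sym {R : realType} {k : nat} (L P : 'M[R]_k) :
  L^T = L -> is_pinv L P -> P^T = P.
Proof.
move=> L_sym [LPL PLP LP_sym PL_sym].
have PtL : P^T *m L = L *m P by rewrite -LP_sym trmx_mul L_sym.
have LPt : L *m P^T = P *m L by rewrite -PL_sym trmx_mul L_sym.
have P_eq : P = P *m L *m P^T.
  have P_eq' : P = P *m P^T *m L by rewrite -mulmxA PtL mulmxA PLP.
  rewrite {1}P_eq' -{1}LPL.
  have -> : P *m P^T *m (L *m P *m L) = P *m (P^T *m L) *m (P *m L)
    by rewrite !mulmxA.
  by rewrite PtL -{1}LPt !mulmxA PLP.
by rewrite {1}P_eq !trmx_mul trmxK L_sym mulmxA.
Qed.

(* The second case is the default value of [xget], reached only if [L] has no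
   pseudoinverse. *)
Lemma pinvP {R : realType} {k : nat} (L : 'M[R]_k) :
  is_pinv L (pinv L) \/ pinv L = 0.
Proof.
have [[P LP]|no_pinv] := pselect (exists P, is_pinv L P).
  by left; exact: (xgetPex 0 (ex_intro _ P LP)).
by right; rewrite /pinv xgetPN // => P LP; apply: no_pinv; exists P.
Qed.

Section WeightedPinvBound.
Context {R : realType} {n m : nat} (A : 'M[R]_(n, m)) (r : 'cV[R]_m).
Hypothesis r_gt0 : forall i, 0 < r i 0.

Let W := diag_mx (\row_j (r j 0)^-1).
Let L := A *m W *m A^T.

Lemma weighted_gram_sym : L^T = L.
Proof. by rewrite /L !trmx_mul trmxK tr_diag_mx mulmxA. Qed.

Lemma pinv_quad_le_weighted (P : 'M[R]_n) (x : 'cV[R]_m) :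
  P^T = P -> P *m L *m P = P ->
  ((A *m x)^T *m P *m (A *m x)) 0 0 <= \sum_i r i 0 * x i 0 ^+ 2.
Proof.
move=> P_sym PLP; set Q := (_ 0 0).
set c := A^T *m P *m (A *m x).
have Q_lin : Q = \sum_i x i 0 * c i 0.
  have -> : Q = (x^T *m c) 0 0 by rewrite /Q /c trmx_mul !mulmxA.
  by rewrite mxE; apply: eq_bigr => i _; rewrite mxE.
have Q_quad : Q = \sum_i c i 0 ^+ 2 / r i 0.
  have -> : Q = (c^T *m W *m c) 0 0.
    by rewrite /Q /c !trmx_mul trmxK P_sym -[in LHS]PLP /L !mulmxA.
  by rewrite /W mul_mx_diag mxE; apply: eq_bigr => i _; rewrite !mxE expr2 mulrAC.
have := weighted_young x c r r_gt0; rewrite -Q_lin -Q_quad; lra.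
Qed.

End WeightedPinvBound.

Theorem lemma2p1 (R : realType) (n m : nat)
  (A : 'M[R]_(n, m)) (b : 'cV[R]_n) (xs : 'cV[R]_m) (r : 'cV[R]_m)
  (hb : exists y : 'cV[R]_m, A *m y = b)
  (hxs : A *m xs = b)
  (hopt : forall x : 'cV[R]_m, A *m x = b -> normInf xs <= normInf x)
  (hr_pos : forall i : 'I_m, 0 < r i 0)
  (hr_sum : \sum_(i < m) r i 0 = 1) :
  (b^T *m pinv (A *m invmx (Dg r) *m A^T) *m b) 0 0 <= normInf xs ^+ 2.
Proof.
have r_ge0 i : 0 <= r i 0 by exact: ltW.
apply: le_trans _ (convex_sqr_le_normInf xs r r_ge0 hr_sum).
have [pinv_spec|->] := pinvP (A *m invmx (Dg r) *m A^T); last first.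
  rewrite mulmx0 mul0mx mxE; apply: sumr_ge0 => i _.
  by rewrite mulr_ge0 ?sqr_ge0.
have r_neq0 i : r i 0 != 0 by exact: lt0r_neq0.
rewrite invmx_Dg // in pinv_spec *.
rewrite -hxs; apply: pinv_quad_le_weighted => //.
  exact: is_pinv_sym (weighted_gram_sym A r) pinv_spec.
by case: pinv_spec.
Qed.
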